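(* Let $S$ be a scheme on $X$ and $\mathbb F$ a field. If $S$ is triply regular, then $S$ has no bad pairs.
   Context: Let $X$ be a nonempty finite set. A scheme of class $d$ on $X$ is a partition $S=\{R_0,\dots,R_d\}$ of $X\times X$ into nonempty sets such that $R_0=\{(b,b):b\in X\}$; for each $c$ there is $c'$ with $R_{c'}=\{(f,e):(e,f)\in R_c\}$; and for all $i,j,k$ the intersection number $p_{ij}^k=|\{\ell\in X:(m,\ell)\in R_i,(\ell,n)\in R_j\}|$ does not depend on $(m,n)\in R_k$. The valency is $k_a=p_{aa'}^0$; complex product $R_aR_b=\{R_c:p_{ab}^c>0\}$. For $y\in X$, $yR_a=\{z:(y,z)\in R_a\}$; $A_a\in M_X(\mathbb F)$ is the $(0,1)$ adjacency matrix of $R_a$ and $E_a^*(y)$ is the diagonal $(0,1)$-matrix with ones exactly at positions indexed by $yR_a$. The products $E_i^*(y)A_jE_\ell^*(y)$ are the triple products at $y$. $S$ is triply regular if for every $y\in X$ the $\mathbb F$-linear span of all triple products $E_i^*(y)A_jE_\ell^*(y)$ ($R_i,R_j,R_\ell\in S$) is a unital $\mathbb F$-subalgebra of $M_X(\mathbb F)$. Bad pair: $(u,v)$ is a bad pair of $S$ if there exist an integer $a\ge1$ and $R_{i_b},R_{j_b},R_{\ell_b}\in S$ ($b=0,\dots,a$) with $i_0=u$, $\ell_a=v$, $k_{i_b}=k_{\ell_b}=2$ and $p_{i_bj_b}^{\ell_b}=1$ for all $b$, $\ell_c=i_{c+1}$ for $0\le c\le a-1$, and $|R_{u'}R_v|=1$.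 *)

From HB Require Import structures.
From mathcomp Require Import all_boot all_order all_algebra.
Set Implicit Arguments. Unset Strict Implicit. Unset Printing Implicit Defensive.
Import GRing.Theory.
Local Open Scope ring_scope.

(* A scheme of class d on a finite set X is encoded by the labelling
   r : X -> X -> 'I_d.+1, where r x y = c  iff  (x,y) \in R_c. The classes
   R_c = [set p | r p.1 p.2 == c] then partition X * X. *)
Section Scheme.
Variables (X : finType) (d : nat) (r : X -> X -> 'I_d.+1).

Definition rel_class (c : 'I_d.+1) : {set X * X} := [set p | r p.1 p.2 == c].

Definition inter_count (i j : 'I_d.+1) (m n : X) : nat :=
  #|[set l | (r m l == i) && (r l n == j)]|.

Definition is_scheme : Prop :=
  (forall c : 'I_d.+1, exists x y, r x y = c) /\
  (forall x y, r x y = ord0 <-> x = y) /\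
  (forall c : 'I_d.+1, exists c' : 'I_d.+1, forall x y, r y x = c' <-> r x y = c) /\
  (forall i j k : 'I_d.+1, forall m n m' n',
     r m n = k -> r m' n' = k -> inter_count i j m n = inter_count i j m' n').

Definition pnum (i j k : 'I_d.+1) : nat :=
  if [pick p : X * X | r p.1 p.2 == k] is Some p then inter_count i j p.1 p.2
  else 0.

Definition tr_idx (c : 'I_d.+1) : 'I_d.+1 :=
  if [pick c' : 'I_d.+1 | [forall x, forall y, (r y x == c') == (r x y == c)]]
    is Some c' then c' else c.

Definition valency (a : 'I_d.+1) : nat := pnum a (tr_idx a) ord0.

Definition complex_prod (a b : 'I_d.+1) : {set 'I_d.+1} :=
  [set c | 0 < pnum a b c]%N.

Definition bad_pair (u v : 'I_d.+1) : Prop :=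
  exists (a : nat) (i j l : nat -> 'I_d.+1),
    (1 <= a)%N /\ i 0%N = u /\ l a = v /\
    (forall b, (b <= a)%N ->
       valency (i b) = 2%N /\ valency (l b) = 2%N /\ pnum (i b) (j b) (l b) = 1%N) /\
    (forall c, (c < a)%N -> l c = i c.+1) /\
    #|complex_prod (tr_idx u) v| = 1%N.

(* Matrices indexed by X, realised as 'M[F]_#|X| via enum_val. *)
Variable F : fieldType.

Definition adj_mx (a : 'I_d.+1) : 'M[F]_#|X| :=
  \matrix_(s, t) (r (enum_val s) (enum_val t) == a)%:R.

Definition dual_idem (y : X) (a : 'I_d.+1) : 'M[F]_#|X| :=
  \matrix_(s, t) ((s == t) && (r y (enum_val s) == a))%:R.

Definition triple_prod (y : X) (i j l : 'I_d.+1) : 'M[F]_#|X| :=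
  dual_idem y i *m adj_mx j *m dual_idem y l.

(* the F-linear span of all triple products at y, as a row space of mxvecs *)
Definition triple_span (y : X) :=
  (\sum_(t : 'I_d.+1 * 'I_d.+1 * 'I_d.+1)
      <<mxvec (triple_prod y t.1.1 t.1.2 t.2)>>)%MS.

Definition in_span (y : X) (A : 'M[F]_#|X|) : bool :=
  (mxvec A <= triple_span y)%MS.

Definition unital_subalgebra_at (y : X) : Prop :=
  in_span y 1%:M /\
  (forall A B : 'M[F]_#|X|, in_span y A -> in_span y B -> in_span y (A *m B)).

Definition triply_regular : Prop := forall y : X, unital_subalgebra_at y.

End Scheme.

From HB Require Import structures.
From mathcomp Require Import all_boot all_order all_algebra.
Set Implicit Arguments. Unset Strict Implicit. Unset Printing Implicit Defensive.
Import GRing.Theory.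

(* Fix a base point y. A bad pair (u, v) yields a chain of triple products
   E_i*(y) A_j E_l*(y) with p_{ij}^l = 1, whose product M lies in the span at y
   when S is triply regular. For z in yR_v, the column z of M is the unit
   vector at a single point g of yR_u. On the other hand, since R_{u'}R_v is a
   single relation, every triple product, and hence every element of the span,
   has a column z that is constant on yR_u. As k_u = 2, the class yR_u
   contains a point other than g, and this is a contradiction. *)

Section SchemeFacts.
Variables (X : finType) (d : nat) (r : X -> X -> 'I_d.+1).
Hypothesis r_scheme : is_scheme r.

Lemma pnumE i j k m n : r m n = k -> pnum r i j k = inter_count r i j m n.
Proof.
case: r_scheme => _ [_ [_ inter_wd]] rmn; rewrite /pnum.
case: pickP => [p /eqP rp | no_pair]; first exact: inter_wd rp rmn.
by move: (no_pair (m, n)); rewrite /= rmn eqxx.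
Qed.

Lemma tr_idxE c x z : (r z x == tr_idx r c) = (r x z == c).
Proof.
case: r_scheme => _ [_ [tr_ex _]]; rewrite /tr_idx.
case: pickP => [c' /forallP/(_ x)/forallP/(_ z)/eqP // | no_tr].
have [c' c'P] := tr_ex c; suff: false by []; rewrite -(no_tr c').
apply/forallP => x'; apply/forallP => z'.
by apply/eqP; apply/idP/idP => /eqP h; apply/eqP; apply/c'P.
Qed.

Lemma valencyE a y : valency r a = #|[set z | r y z == a]|.
Proof.
have ryy : r y y = ord0 by case: r_scheme => _ [diag _]; apply/diag.
rewrite /valency (pnumE _ _ ryy); apply: eq_card => z.
by rewrite !inE tr_idxE andbb.
Qed.

Lemma valency_gt0_class a y : (0 < valency r a)%N -> exists z, r y z = a.
Proof.
by rewrite (valencyE _ y) card_gt0 => /set0Pn [z]; rewrite inE => /eqP; exists z.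
Qed.

Lemma valency_gt1_class a y g : (1 < valency r a)%N -> exists2 x, r y x = a & x != g.
Proof.
rewrite (valencyE _ y) => /card_gt1P [x1 [x2 [yx1 yx2 x12]]].
move: yx1 yx2; rewrite !inE => /eqP ryx1 /eqP ryx2.
have [x1g | x1g] := eqVneq x1 g; last by exists x1.
by exists x2; rewrite // -x1g eq_sym.
Qed.

Lemma complex_prod_mem u v x y z :
  r y x = u -> r y z = v -> r x z \in complex_prod r (tr_idx r u) v.
Proof.
move=> ryx ryz; rewrite inE (pnumE _ _ (erefl (r x z))) card_gt0.
by apply/set0Pn; exists y; rewrite inE tr_idxE ryx ryz !eqxx.
Qed.

End SchemeFacts.

Local Open Scope ring_scope.

Section TripleProducts.
Variables (F : fieldType) (X : finType) (d : nat) (r : X -> X -> 'I_d.+1) (y : X).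
Hypothesis r_scheme : is_scheme r.

Local Notation tprod := (triple_prod r F y).

Lemma triple_prodE i j l x z :
  tprod i j l (enum_rank x) (enum_rank z) =
  ((r y x == i) && (r x z == j) && (r y z == l))%:R.
Proof.
rewrite /triple_prod mxE (bigD1 (enum_rank z)) //= big1 => [|t tz]; last first.
  by rewrite [dual_idem _ _ _ _ t _]mxE (negbTE tz) mulr0.
rewrite addr0 mxE (bigD1 (enum_rank x)) //= big1 => [|t tx]; last first.
  by rewrite [dual_idem _ _ _ _ _ t]mxE eq_sym (negbTE tx) mul0r.
rewrite addr0 !mxE !eqxx !enum_rankK /=.
by case: (r y x == i); case: (r x z == j); case: (r y z == l); rewrite ?mulr1 ?mulr0.
Qed.

Lemma triple_prod_in_span i j l : in_span r y (tprod i j l).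
Proof. by apply: (sumsmx_sup (i, j, l)) => //; rewrite genmxE. Qed.

(* The entry difference A s1 t - A s2 t is a linear functional on mxvec A,
   so it vanishes on the span as soon as it vanishes on the generators. *)
Lemma in_span_entries_eq s1 s2 t :
  (forall i j l, tprod i j l s1 t = tprod i j l s2 t) ->
  forall A : 'M[F]_#|X|, in_span r y A -> A s1 t = A s2 t.
Proof.
move=> gen_eq A spanA.
pose c : 'cV[F]_(#|X| * #|X|) :=
  delta_mx (mxvec_index s1 t) 0 - delta_mx (mxvec_index s2 t) 0.
have cE B : (mxvec B *m c) 0 0 = B s1 t - B s2 t.
  rewrite mulmxBr; set P := mxvec B *m _; set Q := mxvec B *m _.
  by rewrite mxE [(- Q) _ _]mxE /P /Q -!colE !mxE !mxvecE.
have span_ker : (triple_span r F y <= kermx c)%MS.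
  apply/sumsmx_subP => [[[i j] l]] _; rewrite genmxE sub_kermx.
  by apply/eqP/matrixP => a b; rewrite !ord1 cE gen_eq subrr mxE.
have := submx_trans spanA span_ker; rewrite sub_kermx => /eqP/matrixP/(_ 0 0).
by rewrite cE mxE => /eqP; rewrite subr_eq0 => /eqP.
Qed.

Lemma in_span_col_const u v x1 x2 z :
  #|complex_prod r (tr_idx r u) v| = 1%N ->
  r y x1 = u -> r y x2 = u -> r y z = v ->
  forall A : 'M[F]_#|X|, in_span r y A ->
  A (enum_rank x1) (enum_rank z) = A (enum_rank x2) (enum_rank z).
Proof.
move=> /eqP/cards1P [w prod_w] ryx1 ryx2 ryz.
apply: in_span_entries_eq => i j l; rewrite !triple_prodE ryx1 ryx2 ryz.
have := complex_prod_mem r_scheme ryx1 ryz; have := complex_prod_mem r_scheme ryx2 ryz.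
by rewrite prod_w !inE => /eqP -> /eqP ->.
Qed.

Definition col_delta_on (M : 'M[F]_#|X|) (i l : 'I_d.+1) : Prop :=
  forall z, r y z = l ->
    exists2 x, r y x = i & col (enum_rank z) M = delta_mx (enum_rank x) 0.

Lemma col_delta_on_mul M N i k l :
  col_delta_on M i k -> col_delta_on N k l -> col_delta_on (M *m N) i l.
Proof.
move=> colM colN z ryz; have [x ryx colNz] := colN z ryz.
have [g ryg colMx] := colM x ryx.
by exists g; rewrite // colE -mulmxA -colE colNz -colE.
Qed.

Lemma col_delta_on_triple_prod i j l :
  pnum r i j l = 1%N -> col_delta_on (tprod i j l) i l.
Proof.
move=> pijl z ryz; move: pijl; rewrite (pnumE r_scheme _ _ ryz).
move=> /eqP/cards1P [x inter_x]; have /setP inter_xP := inter_x.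
exists x; first by move: (inter_xP x); rewrite !inE eqxx => /andP [/eqP].
apply/matrixP => s c; rewrite ord1 mxE [delta_mx _ _ _ _]mxE -[s]enum_valK.
rewrite triple_prodE ryz eqxx andbT; move: (inter_xP (enum_val s)); rewrite !inE => ->.
by rewrite (inj_eq enum_rank_inj) andbT.
Qed.

Lemma chain_col_delta (i j l : nat -> 'I_d.+1) a :
  unital_subalgebra_at r F y ->
  (forall b, (b <= a)%N -> pnum r (i b) (j b) (l b) = 1%N) ->
  (forall b, (b < a)%N -> l b = i b.+1) ->
  exists2 M, in_span r y M & col_delta_on M (i 0%N) (l a).
Proof.
move=> [_ span_mul]; elim: a => [|a IH] p1 link.
  exists (tprod (i 0%N) (j 0%N) (l 0%N)); first exact: triple_prod_in_span.
  exact/col_delta_on_triple_prod/p1.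
have [M spanM colM] : exists2 M, in_span r y M & col_delta_on M (i 0%N) (l a).
  by apply: IH => b /leqW; [exact: p1 | exact: link].
exists (M *m tprod (i a.+1) (j a.+1) (l a.+1)); first exact/span_mul/triple_prod_in_span.
rewrite link // in colM; exact/(col_delta_on_mul colM)/col_delta_on_triple_prod/p1.
Qed.

End TripleProducts.

Theorem corollary4p11 (F : fieldType) (X : finType) (d : nat)
  (r : X -> X -> 'I_d.+1) :
  is_scheme r ->
  triply_regular r F ->
  forall u v : 'I_d.+1, ~ bad_pair r u v.
Proof.
move=> r_scheme regular u v [a [i [j [l [_ [i0u [lav [chain [link prod1]]]]]]]]].
have [y [_ _]] := r_scheme.1 ord0.
have [M spanM] := chain_col_delta r_scheme (regular y) (fun b ab => (chain b ab).2.2) link.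
rewrite i0u lav => colM.
have [ku kv] : valency r u = 2%N /\ valency r v = 2%N.
  by rewrite -i0u -lav; split; [case: (chain 0%N) | case: (chain a) => // _ []].
have [z ryz] : exists z, r y z = v by apply: valency_gt0_class; rewrite ?kv.
have [g ryg colMz] := colM z ryz.
have [x ryx xg] : exists2 x, r y x = u & x != g by apply: valency_gt1_class; rewrite ?ku.
have := in_span_col_const r_scheme prod1 ryg ryx ryz spanM.
have entry s : M s (enum_rank z) = col (enum_rank z) M s 0 by rewrite mxE.
rewrite !entry colMz !mxE eqxx (can_eq enum_rankK) (negbTE xg) /=.
by move/eqP; rewrite oner_eq0.
Qed.
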